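(* Let $\bar u=\langle F_i\mid i<\omega\rangle$, with maps $f^m_n\in\ddagger\mathcal{F}_P(F_m,F_n)$, be a Fraïssé sequence for the category $\ddagger\mathcal{F}_P$, and let $(\mathbb F,E)$ be its limit. Then $E\subseteq\mathrm{End}(\mathbb F)$ and $E$ is dense in $\mathbb F$.
   Context: Fix $P\subseteq\{3,4,\ldots,\infty\}$. A finite tree is viewed as a graph with reflexive symmetric edge relation $R$. For finite trees $A,B$, a monotone epimorphism $f\colon B\to A$ (edges map onto edges and preimages of connected sets are connected) is weakly coherent at a vertex $a\in A$ with $\mathrm{ord}(a)=n\geq 3$ if there is $b\in f^{-1}(a)$ (the witness) with $\mathrm{ord}(b)\geq n$ such that the preimages under $f$ of the $n$ distinct connected components of $A\setminus\{a\}$ lie in $n$ distinct connected components of $B\setminus\{b\}$; $f$ is weakly coherent if this holds at every $a$ with $\mathrm{ord}(a)\geq3$. The category $\ddagger\mathcal{F}_P$: objects are finite trees $A$ having at least one ramification point, in which every vertex is an endpoint or a ramification point, each ramification point $a$ carries exactly one label $p\in P$ (unary predicate $U_p(a)$) with $\mathrm{ord}(a)\leq p$, and endpoints carry no label. An arrow $f\in\ddagger\mathcal{F}_P(B,A)$ is a pair $(p(f),e(f))$ where $p(f)\colon B\to A$ is a weakly coherent epimorphism of trees such that whenever $U_p(a)$ holds and $b$ witnesses the weak coherence of $p(f)$ at $a$, then $U_p(b)$ holds; and $e(f)\colon\mathrm{End}(A)\to\mathrm{End}(B)$ is a map with $p(f)\circ e(f)=\mathrm{Id}_{\mathrm{End}(A)}$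 (here $\mathrm{End}(X)$ is the set of endpoints). Composition is $f\circ g=(p(f)\circ p(g),e(g)\circ e(f))$. A Fraïssé sequence for $\ddagger\mathcal{F}_P$ is a sequence $\langle F_n\rangle$ with arrows $f^m_n\in\ddagger\mathcal{F}_P(F_m,F_n)$ such that (1) for every object $X$ there is $n$ with $\ddagger\mathcal{F}_P(F_n,X)\neq\varnothing$, and (2) for every $n$ and every arrow $f\in\ddagger\mathcal{F}_P(Y,F_n)$ there exist $m\geq n$ and $g\in\ddagger\mathcal{F}_P(F_m,Y)$ with $f\circ g=f^m_n$. The limit of such a sequence is the pair $(\mathbb F,E)$, where $\mathbb F\subseteq\prod_i F_i$ is the inverse limit (as a topological graph, with product topology of discrete spaces) of the projections $p(f^{m}_n)$, with canonical projections $f_m\colon\mathbb F\to F_m$, and $E$ is the direct limit of the embedding parts $e(f^m_n)$, i.e. the countable set of points of $\mathbb F$ determined by sequences of the form $(p(f^m_0)(y),\ldots,p(f^m_{m-1})(y),y,e(f^{m+1}_m)(y),e(f^{m+2}_m)(y),\ldots)$ for $y\in\mathrm{End}(F_m)$. An endpoint of a topological graph $G$ is a vertex $x$ such that whenever an arc is embedded in $G$ through $x$, $x$ is the image of an endpoint of the arc. *)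

From mathcomp Require Import all_boot.
Set Implicit Arguments. Unset Strict Implicit. Unset Printing Implicit Defensive.

(* Extended naturals {0,1,...,oo}: [Some n] = n, [None] = infinity. *)
Definition ext_nat := option nat.
Definition le_ext (k : nat) (p : ext_nat) : bool :=
  match p with Some n => k <= n | None => true end.

Section FinGraph.
Variables (V : finType) (R : rel V).

Definition ord (a : V) : nat := #|[set b | (b != a) && R a b]|.
Definition is_endpoint (a : V) : bool := ord a == 1.
Definition is_ram (a : V) : bool := 3 <= ord a.

Definition adj : rel V := fun x y => (x != y) && R x y.

Definition is_tree : Prop :=
  (forall x y, connect R x y) /\
  (forall c : seq V, 3 <= size c -> uniq c -> ~~ cycle adj c).

Definition connected_set (S : {set V}) : Prop :=
  forall x y, x \in S -> y \in S ->
    connect (fun u v => [&& u \in S, v \in S & R u v]) x y.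

Definition same_comp (a x y : V) : bool :=
  [&& x != a, y != a & connect (fun u v => [&& u != a, v != a & R u v]) x y].
End FinGraph.

Section Maps.
Variables (B A : finType) (RB : rel B) (RA : rel A) (f : B -> A).

Definition monotone_epi : Prop :=
  (forall b b', RB b b' -> RA (f b) (f b')) /\
  (forall a a', RA a a' -> exists b b', [/\ RB b b', f b = a & f b' = a']) /\
  (forall S : {set A}, connected_set RA S -> connected_set RB (f @^-1: S)).

Definition wc_witness (a : A) (b : B) : Prop :=
  [/\ f b = a, ord RA a <= ord RB b,
     (forall b1 b2, f b1 != a -> f b2 != a ->
        same_comp RA a (f b1) (f b2) -> same_comp RB b b1 b2)
   & (forall b1 b2, f b1 != a -> f b2 != a ->
        same_comp RB b b1 b2 -> same_comp RA a (f b1) (f b2))].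

Definition weakly_coherent : Prop :=
  forall a, 3 <= ord RA a -> exists b, wc_witness a b.
End Maps.

Record tobj (P : ext_nat -> Prop) := TObj {
  tV : finType;
  tR : rel tV;
  (* tlab a = Some p : a carries the (unique) label p; None : no label *)
  tlab : tV -> option ext_nat;
  t_refl : reflexive tR;
  t_sym : symmetric tR;
  t_tree : is_tree tR;
  t_has_ram : exists a, is_ram tR a;
  t_vert : forall a, is_endpoint tR a || is_ram tR a;
  t_lab_ram : forall a, is_ram tR a ->
      exists p, [/\ tlab a = Some p, P p & le_ext (ord tR a) p];
  t_lab_end : forall a, is_endpoint tR a -> tlab a = None
}.

Arguments tV {P} t.
Arguments tR {P} t.
Arguments tlab {P t}.
Definition EndT P (A : tobj P) := {x : tV A | is_endpoint (tR A) x}.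

Record tarr P (B A : tobj P) := TArr {
  pm : tV B -> tV A;
  em : EndT A -> EndT B;
  pm_epi : monotone_epi (tR B) (tR A) pm;
  pm_wc : weakly_coherent (tR B) (tR A) pm;
  pm_lab : forall a (p : ext_nat), 3 <= ord (tR A) a -> tlab a = Some p ->
      forall b, wc_witness (tR B) (tR A) pm a b -> tlab b = Some p;
  pm_em : forall y : EndT A, pm (val (em y)) = val y
}.

Arguments pm {P B A} t.
Arguments em {P B A} t.

Section Seq.
Local Unset Implicit Arguments.
Variable P : ext_nat -> Prop.
Variable F : nat -> tobj P.
Variable fb : forall n, tarr (F n.+1) (F n).

Fixpoint pcomp (n k : nat) : tV (F (k + n)) -> tV (F n) :=
  match k return tV (F (k + n)) -> tV (F n) with
  | 0 => fun x => x
  | k'.+1 => fun x => pcomp n k' (pm (fb (k' + n)) x)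
  end.

Fixpoint ecomp (n k : nat) : EndT (F n) -> EndT (F (k + n)) :=
  match k return EndT (F n) -> EndT (F (k + n)) with
  | 0 => fun y => y
  | k'.+1 => fun y => em (fb (k' + n)) (ecomp n k' y)
  end.

Definition fraisse_seq : Prop :=
  (forall X : tobj P, exists n, inhabited (tarr (F n) X)) /\
  (forall n (Y : tobj P) (f : tarr Y (F n)),
     exists k (g : tarr (F (k + n)) Y),
       (forall x, pm f (pm g x) = pcomp n k x) /\
       (forall y, em g (em f y) = ecomp n k y)).

Definition pt := forall i, tV (F i).
Definition pt_eq (x y : pt) : Prop := forall i, x i = y i.

Definition inLim (x : pt) : Prop := forall i, pm (fb i) (x i.+1) = x i.
Definition limR (x y : pt) : Prop := forall i, tR (F i) (x i) (y i).

(* S is closed relative to A (product topology of discrete spaces) *)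
Definition relclosed (A S : pt -> Prop) : Prop :=
  forall x, A x ->
    (forall n, exists s, S s /\ forall i, i <= n -> s i = x i) -> S x.

Definition connectedT (A : pt -> Prop) : Prop :=
  ~ exists S T : pt -> Prop,
      [/\ forall x, A x <-> S x \/ T x,
          forall x, ~ (S x /\ T x),
          (exists x, S x) /\ (exists x, T x),
          relclosed A S /\ relclosed A T
        & forall x y, S x -> T y -> ~ limR x y].

Definition nonsep (A : pt -> Prop) (x : pt) : Prop :=
  A x /\ connectedT (fun y => A y /\ ~ pt_eq y x).

Definition isArc (A : pt -> Prop) : Prop :=
  connectedT A /\
  exists a b, [/\ ~ pt_eq a b, nonsep A a, nonsep A b &
               forall c, nonsep A c -> pt_eq c a \/ pt_eq c b].

(* endpoints of 𝔽: for every arc embedded (as a closed induced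
   subgraph) in 𝔽 through x, x is an endpoint of that arc *)
Definition isEndLim (x : pt) : Prop :=
  inLim x /\
  forall A : pt -> Prop,
    (forall y, A y -> inLim y) -> relclosed inLim A -> isArc A -> A x ->
    nonsep A x.

Definition in_E (x : pt) : Prop :=
  inLim x /\
  exists m (y : EndT (F m)), forall k, x (k + m) = val (ecomp m k y).

Definition dense_in_Lim (D : pt -> Prop) : Prop :=
  forall x, inLim x -> forall n, exists e, D e /\ forall i, i <= n -> e i = x i.
End Seq.
Arguments pcomp {P F} fb n k.
Arguments ecomp {P F} fb n k.
Arguments fraisse_seq {P F} fb.
Arguments inLim {P F} fb x.
Arguments limR {P F} x y.
Arguments relclosed {P F} A S.
Arguments connectedT {P F} A.
Arguments nonsep {P F} A x.
Arguments isArc {P F} A.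
Arguments isEndLim {P F} fb x.
Arguments in_E {P F} fb x.
Arguments dense_in_Lim {P F} fb D.

From Pilot Require Import Defs.
From mathcomp Require Import all_boot.
From Stdlib Require Import Classical FunctionalExtensionality.
Set Implicit Arguments. Unset Strict Implicit. Unset Printing Implicit Defensive.

(* Endpoints.  Let x be in E, so that x_k is an endpoint of F_k for all large k, and
   suppose an arc A through x had A \ {x} split into relatively closed parts S and T with
   no edges between them.  Since A is connected, some edge leaves the cylinder
   {z | z_k = x_k} into S, and likewise into T.  Preimages of connected sets under the
   bonding maps are connected, so at every level j >= k the fibre over the endpoint x_k
   and its complement are subtrees of F_j, joined by a single edge.  The two edges found
   above therefore end at the same point of the limit, which lies in both S and T.

   Density.  A point x of the limit is approximated at level n by a point of E through
   x_n.  If x_n is an endpoint, thread it upwards along the maps e(f).  If x_n is a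
   ramification point, subdivide an edge at x_n and hang a new endpoint on the new
   vertex; this tree maps onto F_n, the Fraisse property factors some f^m_n through it,
   and the image of the new endpoint under e starts the required thread. *)

Lemma connect_hom (T T' : finType) (e : rel T) (e' : rel T') (h : T -> T') :
  (forall x y, e x y -> connect e' (h x) (h y)) ->
  forall x y, connect e x y -> connect e' (h x) (h y).
Proof.
move=> eh x y /connectP [p pp ->]; elim: p x pp => [|z p IH] x /=.
  by rewrite connect0.
by case/andP=> exz pz; exact: connect_trans (eh _ _ exz) (IH _ pz).
Qed.

Lemma path_adj (T : eqType) (e : rel T) x p :
  path e x p -> uniq (x :: p) -> path (fun a b => (a != b) && e a b) x p.
Proof.
elim: p x => [|y p IH] x //= /andP [exy py] /andP [xn up].
rewrite exy andbT IH // andbT; apply: contraNneq xn => ->; exact: mem_head.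
Qed.

Lemma cycle_through (T : eqType) (e : rel T) (c : seq T) u :
  3 <= size c -> cycle e c -> u \in c ->
  exists v s w, [/\ perm_eq c [:: u, v & rcons s w], e u v, path e v (rcons s w) & e w u].
Proof.
move=> c3 cc /rot_to [i t ct].
have pc : perm_eq c (u :: t) by rewrite -ct perm_sym perm_rot.
have : cycle e (u :: t) by rewrite -ct rot_cycle.
case: t ct pc => [|v t] ct pc; first by rewrite (perm_size pc) in c3.
case/lastP: t ct pc => [|s w] ct pc; first by rewrite (perm_size pc) in c3.
rewrite /= rcons_path last_rcons => /and3P [uv pvw wu].
by exists v, s, w.
Qed.

(** * Finite trees *)

Section Tree.
Variables (V : finType) (R : rel V).
Hypotheses (Rsym : symmetric R) (Rtree : is_tree R).

Let restr (S : {set V}) := fun u v => [&& u \in S, v \in S & R u v].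

Lemma restr_path (S : {set V}) x p :
  x \in S -> {subset p <= S} -> path R x p -> path (restr S) x p.
Proof.
elim: p x => [|y p IH] x //= xS pS /andP [Rxy py].
have yS : y \in S by apply: pS; exact: mem_head.
by rewrite /restr xS yS Rxy IH // => w wp; apply: pS; rewrite inE wp orbT.
Qed.

Lemma restr_path_sub (S : {set V}) x p :
  path (restr S) x p -> all (mem S) p /\ path R x p.
Proof.
elim: p x => [|y p IH] x //= /andP [/and3P [_ yS Rxy] /IH [allp py]].
by rewrite yS Rxy.
Qed.

Lemma connected_shortest_path (S : {set V}) x y :
  connected_set R S -> x \in S -> y \in S ->
  exists p, [/\ path (adj R) x p, uniq (x :: p), {subset p <= S} & last x p = y].
Proof.
move=> cS xS yS; have /connectP [p0 pp0 ->] := cS _ _ xS yS.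
case: (shortenP pp0) => p /restr_path_sub [allp pp] up _.
by exists p; split => //; [exact: path_adj | exact/allP].
Qed.

(* Two crossing edges with [v != v'] would close a cycle through [X] and its complement. *)
Lemma tree_boundary_unique (X : {set V}) u u' v v' :
  connected_set R X -> connected_set R (~: X) ->
  u \in X -> u' \in X -> v \notin X -> v' \notin X -> R u v -> R u' v' -> v = v'.
Proof.
move=> cX cY uX u'X vX v'X Ruv Ru'v'; case: (eqVneq v v') => // nvv'; exfalso.
have vY : v \in ~: X by rewrite inE.
have v'Y : v' \in ~: X by rewrite inE.
have [pY [pathY uniqY allY lastY]] := connected_shortest_path cY vY v'Y.
have [pX [pathX uniqX allX lastX]] := connected_shortest_path cX u'X uX.
have notX w : w \in v :: pY -> w \notin X.
  by case/predU1P => [->|/allY]; rewrite // inE.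
have inX w : w \in u' :: pX -> w \in X by case/predU1P => [->|/allX].
apply: (negP (Rtree.2 ((v :: pY) ++ (u' :: pX)) _ _)).
- have pY0 : 0 < size pY.
    by rewrite lt0n size_eq0; apply: contra_neq nvv' => pY0; rewrite -lastY pY0.
  by rewrite size_cat /= addSn addnS !ltnS (leq_trans pY0 (leq_addr _ _)).
- rewrite cat_uniq uniqY uniqX andbT; apply/hasPn => w /inX wX.
  by apply: contraL wX => /notX.
- rewrite /= rcons_cat rcons_cons cat_path pathY /= rcons_path pathX lastY lastX /adj.
  rewrite Ruv Rsym Ru'v' !andbT; apply/andP; split.
    by apply: contraNneq v'X => ->.
  by apply: contraNneq vX => <-.
Qed.

Lemma tree_connected_set : connected_set R setT.
Proof.
move=> x y _ _; apply: (connect_sub _ (Rtree.1 x y)) => u v Ruv.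
by apply: connect1; rewrite !inE.
Qed.

Lemma interior_ord_ge2 y p a :
  path (adj R) y p -> uniq (y :: p) -> a \in p -> a != last y p -> 2 <= ord R a.
Proof.
move=> pp up ap; case/splitPr: ap pp up => p1 p2.
rewrite cat_path last_cat /= => /andP [_ /andP [pre_a]].
case: p2 => [|w p2] /=; first by rewrite eqxx.
case/andP=> a_w _ up _.
have : uniq ((y :: p1) ++ [:: a, w & p2]) by exact: up.
rewrite cat_uniq => /and3P [_ dis /andP [aw _]].
set pre := last y p1; have pre_in : pre \in y :: p1 by exact: mem_last.
have pre_w : pre != w.
  by apply: contraTneq pre_in => ->; apply: (hasPn dis); rewrite !inE eqxx orbT.
have pre_a' : pre != a by apply: contraTneq pre_in => ->; apply: (hasPn dis); exact: mem_head.
have <- : #|[set pre; w]| = 2 by rewrite cards2 pre_w.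
apply: subset_leq_card; apply/subsetP => b.
move: pre_a a_w aw; rewrite /adj !inE => /andP [_ Rpa] /andP [_ Raw] aw.
case/orP => /eqP ->; first by rewrite pre_a' Rsym.
by rewrite Raw andbT eq_sym; apply: contraNneq aw => ->; exact: mem_head.
Qed.

Lemma connected_compl_endpoint a : is_endpoint R a -> connected_set R (~: [set a]).
Proof.
move=> aE y z; rewrite !inE => ya za.
have [p [pp up _ lp]] := connected_shortest_path tree_connected_set (in_setT y) (in_setT z).
have ap : a \notin p.
  apply/negP => ap; have := interior_ord_ge2 pp up ap; rewrite lp eq_sym za.
  by move/(_ isT); rewrite (eqP aE).
apply/connectP; exists p => //; apply: restr_path; first by rewrite !inE.
  by move=> w wp; rewrite !inE; apply: contraNneq ap => <-.
by apply: sub_path pp => u v /andP [].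
Qed.

End Tree.

(** * Endpoints of the limit *)

Section Limit.
Variables (P : ext_nat -> Prop) (F : nat -> tobj P) (fb : forall n, tarr (F n.+1) (F n)).
Local Notation pt := (pt P F).
Local Notation inLim := (inLim fb).
Local Notation punctured A x := (fun z : pt => A z /\ ~ pt_eq P F z x).

Lemma pt_ext (x y : pt) : pt_eq P F x y -> x = y.
Proof. exact: functional_extensionality_dep. Qed.

Lemma inLim_eq_below (x y : pt) j : inLim x -> inLim y -> x j = y j ->
  forall i, i <= j -> x i = y i.
Proof.
move=> xL yL; elim: j => [|j IH] xyj i; first by rewrite leqn0 => /eqP ->.
rewrite leq_eqVlt => /predU1P [-> //|]; rewrite ltnS; apply: IH.
by rewrite -xL -yL xyj.
Qed.

Lemma inLim_neq_above (x y : pt) i j : inLim x -> inLim y -> x i <> y i ->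
  i <= j -> x j <> y j.
Proof. by move=> xL yL xyi ij xyj; apply: xyi; exact: inLim_eq_below xyj i ij. Qed.

Lemma pt_neq_coord (x y : pt) : ~ pt_eq P F x y -> exists i, x i <> y i.
Proof.
by move=> xy; apply: NNPP => h; apply: xy => i; apply: NNPP => xyi; apply: h; exists i.
Qed.

Lemma pcomp_inLim x : inLim x -> forall n d, Defs.pcomp fb n d (x (d + n)) = x n.
Proof. by move=> xL n; elim=> [|d IH] //=; rewrite xL. Qed.

Lemma pcomp_connected_preim n d (S : {set tV (F n)}) :
  connected_set (tR (F n)) S -> connected_set (tR (F (d + n))) (Defs.pcomp fb n d @^-1: S).
Proof.
elim: d => [|d IH] cS.
  by have -> : Defs.pcomp fb n 0 @^-1: S = S by apply/setP => u; rewrite inE.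
have -> : Defs.pcomp fb n d.+1 @^-1: S = pm (fb (d + n)) @^-1: (Defs.pcomp fb n d @^-1: S).
  by apply/setP => u; rewrite !inE.
exact: (pm_epi _).2.2 _ (IH cS).
Qed.

Lemma approx_refine (Q Q' : pt -> Prop) (z : pt) k :
  (forall n, exists s, Q s /\ forall i, i <= n -> s i = z i) ->
  (forall s, Q s -> s k = z k -> Q' s) ->
  forall n, exists s, Q' s /\ forall i, i <= n -> s i = z i.
Proof.
move=> approx QQ' n; have [s [Qs agree]] := approx (maxn n k).
exists s; split; first exact: QQ' Qs (agree _ (leq_maxr _ _)).
by move=> i ni; apply: agree; exact: leq_trans ni (leq_maxl _ _).
Qed.

(* [A] splits into the points of [S] off the cylinder over [x k] and the rest; both parts
   are relatively closed, so connectedness of [A] forces an edge between them. *)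
Lemma connectedT_cylinder_edge (A S T : pt -> Prop) (x s : pt) k :
  connectedT A -> A x ->
  (forall z, punctured A x z <-> S z \/ T z) -> (forall z, ~ (S z /\ T z)) ->
  relclosed (punctured A x) S -> relclosed (punctured A x) T ->
  (forall a b, T a -> S b -> ~ limR a b) ->
  S s -> s k <> x k ->
  exists z b, [/\ A z, z k = x k, S b, b k <> x k & limR z b].
Proof.
move=> cA Ax part disj clS clT noTS Ss sk; apply: NNPP => noedge; apply: cA.
pose T' z := S z /\ z k <> x k.
have SA z : S z -> A z by move=> Sz; case: ((part z).2 (or_introl Sz)).
have off_x z : z k <> x k -> ~ pt_eq P F z x by move=> zk zx; exact: zk (zx k).
exists (fun z => A z /\ ~ T' z), T'; split.
- move=> z; split; last by case=> [[]|[/SA]].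
  by move=> Az; case: (classic (T' z)); [right | left].
- by move=> z [[_ ?] ?].
- by split; [exists x | exists s]; split => // [[]].
- split=> z Az approx.
    split=> // [[Sz zk]]; apply: (disj z); split=> //.
    apply: clT; first by split=> //; exact: off_x zk.
    apply: (approx_refine (k := k) approx) => b [Ab nT'b] bk.
    have bxk : b k <> x k by rewrite bk.
    by case: ((part b).1 (conj Ab (off_x _ bxk))) => // Sb; case: nT'b.
  have [b [[_ bk] agree]] := approx k.
  have zk : z k <> x k by rewrite -(agree k (leqnn k)).
  split=> //; apply: clS; first by split=> //; exact: off_x zk.
  by move=> n; have [b' [[Sb' _] agree']] := approx n; exists b'.
- move=> z b [Az nT'z] [Sb bk] zb; case: (classic (z k = x k)) => zk.
    by apply: noedge; exists z, b.
  by case: ((part z).1 (conj Az (off_x _ zk))) => [Sz|Tz];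
    [apply: nT'z | apply: noTS Tz Sb zb].
Qed.

Lemma endpoint_boundary_unique k (a : tV (F k)) (z z' b b' : pt) :
  is_endpoint (tR (F k)) a -> inLim z -> inLim z' -> inLim b -> inLim b' ->
  z k = a -> z' k = a -> b k <> a -> b' k <> a -> limR z b -> limR z' b' -> b = b'.
Proof.
move=> aE zL z'L bL b'L zk z'k bk b'k zb z'b'.
suff above d : b (d + k) = b' (d + k).
  by apply: pt_ext => i; apply: inLim_eq_below bL b'L (above i) i (leq_addr _ _).
set X := Defs.pcomp fb k d @^-1: [set a].
apply: (tree_boundary_unique (@t_sym _ _) (t_tree _) (X := X) _ _ _ _ _ _
          (zb (d + k)) (z'b' (d + k))).
- apply: pcomp_connected_preim => u v; rewrite !inE => /eqP -> /eqP ->; exact: connect0.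
- rewrite -preimsetC; apply: pcomp_connected_preim.
  exact: (connected_compl_endpoint (@t_sym _ _) (t_tree _) aE).
all: by rewrite /X !inE pcomp_inLim //; apply/eqP.
Qed.

Theorem in_E_isEndLim x : in_E fb x -> isEndLim fb x.
Proof.
move=> [xL [m [y xE]]]; split=> // A AL _ [cA _] Ax; split=> //.
move=> [S [T [part disj [[s Ss] [t Tt]] [clS clT] noST]]].
have noTS a b : T a -> S b -> ~ limR a b.
  by move=> Ta Sb ab; apply: (noST b a Sb Ta) => i; rewrite t_sym; exact: ab i.
have [[sA sx] [tA tx]] := conj ((part s).2 (or_introl Ss)) ((part t).2 (or_intror Tt)).
have [[i si] [j tj]] := conj (pt_neq_coord sx) (pt_neq_coord tx).
pose k := (i + j) + m.
have sk : s k <> x k by apply: inLim_neq_above (AL _ sA) xL si _; rewrite /k -addnA leq_addr.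
have tk : t k <> x k.
  by apply: inLim_neq_above (AL _ tA) xL tj _; rewrite /k -addnA addnCA leq_addr.
have part' z : punctured A x z <-> T z \/ S z by rewrite part; tauto.
have disj' z : ~ (T z /\ S z) by case=> Tz Sz; exact: disj z (conj Sz Tz).
have [z [b [Az zk Sb bk zb]]] := connectedT_cylinder_edge cA Ax part disj clS clT noTS Ss sk.
have [z' [b' [Az' z'k Tb' b'k z'b']]] :=
  connectedT_cylinder_edge cA Ax part' disj' clT clS noST Tt tk.
have bA : A b by case: ((part b).2 (or_introl Sb)).
have b'A : A b' by case: ((part b').2 (or_intror Tb')).
have xE_k : is_endpoint (tR (F k)) (x k) by rewrite /k xE; exact: valP.
apply: (disj b); split=> //.
by rewrite (endpoint_boundary_unique xE_k (AL _ Az) (AL _ Az') (AL _ bA) (AL _ b'A)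
              zk z'k bk b'k zb z'b').
Qed.
End Limit.

(** * Points of E and their density *)

Section Threads.
Variables (P : ext_nat -> Prop) (F : nat -> tobj P) (fb : forall n, tarr (F n.+1) (F n)).

Definition castF i j (h : i = j) (u : tV (F i)) : tV (F j) := ecast l (tV (F l)) h u.

Lemma castF_id i (h : i = i) u : castF h u = u.
Proof. by rewrite (eq_axiomK h). Qed.

Lemma castF_trans i j l (h1 : i = j) (h2 : j = l) (h3 : i = l) u :
  castF h2 (castF h1 u) = castF h3 u.
Proof. by move: h2 h3; case: j / h1; case: l / => h3; rewrite !castF_id. Qed.

Lemma castF_pm i j (h : i = j) (hS : i.+1 = j.+1) u :
  pm (fb j) (castF hS u) = castF h (pm (fb i) u).
Proof. by case: j / h hS => hS; rewrite !castF_id. Qed.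

Lemma castF_dep (f : nat -> nat) (G : forall d, tV (F (f d))) d1 d2
    (h : d1 = d2) (h' : f d1 = f d2) :
  G d2 = castF h' (G d1).
Proof. by case: d2 / h h' => h'; rewrite castF_id. Qed.

Lemma thread_point m (G : forall d, tV (F (d + m))) :
  (forall d, pm (fb (d + m)) (G d.+1) = G d) ->
  exists e : pt P F, inLim fb e /\ forall d, e (d + m) = G d.
Proof.
elim: m G => [|m IH] G GL.
  exists (fun i => castF (addn0 i) (G i)); split=> [i|d] /=.
    by rewrite (castF_pm (addn0 i) (addn0 i.+1) (G i.+1)) GL.
  rewrite (castF_dep (f := addn^~ 0) G (esym (addn0 d)) (esym (addn0 (d + 0)))).
  by rewrite castF_trans castF_id.
pose G' d : tV (F (d + m)) :=
  if d is d'.+1 then castF (esym (addSnnS d' m)) (G d') else pm (fb m) (G 0).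
have G'L d : pm (fb (d + m)) (G' d.+1) = G' d.
  case: d => [|d] /=; first by rewrite castF_id.
  by rewrite (castF_pm (esym (addSnnS d m)) _ (G d.+1)) GL.
have [e [eL eG']] := IH G' G'L; exists e; split=> // d.
by rewrite (castF_dep (f := id) e (addSnnS d m) (addSnnS d m)) eG' /= castF_trans castF_id.
Qed.

Lemma in_E_through m (y : EndT (F m)) : exists e, in_E fb e /\ e m = val y.
Proof.
have [e [eL ey]] := thread_point (G := fun d => val (ecomp fb m d y)) (fun d => pm_em _ _).
by exists e; split; [split=> //; exists m, y | exact: ey 0].
Qed.
End Threads.

Section SubdivideEdge.
Variables (P : ext_nat -> Prop) (A : tobj P) (a c : tV A).
Hypotheses (a_ram : is_ram (tR A) a) (ac : a != c) (Rac : tR A a c).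
Local Notation V := (tV A).
Local Notation RA := (tR A).

(* The edge [a]-[c] is subdivided by a vertex [mid] carrying a new endpoint [leaf];
   [squash a] collapses both new vertices onto [a]. *)
Definition YV := (V + bool)%type.
Definition mid : YV := inr true.
Definition leaf : YV := inr false.

Definition is_ac (p q : V) := ((p == a) && (q == c)) || ((p == c) && (q == a)).

Definition RY (u v : YV) : bool :=
  match u, v with
  | inl p, inl q => RA p q && ~~ is_ac p q
  | inl p, inr true | inr true, inl p => (p == a) || (p == c)
  | inl _, inr false | inr false, inl _ => false
  | inr _, inr _ => true
  end.

Definition squash (q : V) (u : YV) : V := if u is inl p then p else q.

Definition labY (u : YV) : option ext_nat :=
  match u with inl p => tlab p | inr true => tlab a | inr false => None end.

Lemma inlE (p q : V) : (inl p == inl q :> YV) = (p == q).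
Proof. by apply/eqP/eqP => [[]|->]. Qed.

Lemma is_acC p q : is_ac p q = is_ac q p.
Proof. by rewrite /is_ac orbC; congr orb; apply: andbC. Qed.

Lemma is_ac_RA p q : is_ac p q -> (p != q) && RA p q.
Proof.
case/orP => /andP [/eqP -> /eqP ->]; first by rewrite ac Rac.
by rewrite eq_sym ac (@t_sym _ A) Rac.
Qed.

Lemma is_ac_refl p : is_ac p p = false.
Proof. by apply/negP => /is_ac_RA; rewrite eqxx. Qed.

Lemma RY_refl : reflexive RY.
Proof. by case=> [p|[]] //=; rewrite (@t_refl _ A) is_ac_refl. Qed.

Lemma RY_sym : symmetric RY.
Proof. by case=> [p|[]] [q|[]] //=; rewrite (@t_sym _ A) is_acC. Qed.

Lemma squash_hom q u v : (q == a) || (q == c) -> RY u v -> RA (squash q u) (squash q v).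
Proof.
have RAsym := @t_sym _ A; have RArefl := @t_refl _ A.
move=> qac; case: u => [p|[]]; case: v => [p'|[]] //=; rewrite ?RArefl //.
  by case/andP.
all: by move=> pac; case/orP: qac pac => /eqP -> /orP [] /eqP ->; rewrite ?RArefl // RAsym.
Qed.

Lemma ordY_inl p : ord RY (inl p) = ord RA p.
Proof.
pose phi q : YV := if is_ac p q then mid else inl q.
have phi_inj : injective phi.
  move=> q q'; rewrite /phi; case: ifP => [pq|_]; case: ifP => [pq'|_] //; last by case.
  move: pq pq'; rewrite /is_ac; case: (eqVneq p a) => [->|pa].
    by rewrite ?eqxx ?(negbTE ac) /= ?orbF => /eqP -> /eqP ->.
  by move=> /andP [_ /eqP ->] /andP [_ /eqP ->].
rewrite /ord -(card_imset _ phi_inj).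
congr #|pred_of_set _|; apply/setP => v; apply/idP/imsetP => [|[q]]; rewrite !inE.
- case: v => [q|[]] //=.
    rewrite inlE => /andP [qp /andP [pq npq]]; exists q; first by rewrite inE qp.
    by rewrite /phi (negbTE npq).
  case/orP => /eqP pE; [exists c | exists a]; rewrite ?inE /phi pE /is_ac ?eqxx ?orbT //.
    by rewrite eq_sym ac Rac.
  by rewrite ac (@t_sym _ A) Rac.
- case/andP => qp pq ->; rewrite /phi; case: ifP => [|npq] /=.
    by case/orP => /andP [/eqP -> _]; rewrite eqxx ?orbT.
  by rewrite inlE qp pq npq.
Qed.

Lemma ordY_mid : ord RY mid = 3.
Proof.
rewrite /ord.
have -> : [set v | (v != mid) && RY mid v] = inl a |: (inl c |: [set leaf]).
  by apply/setP => -[q|[]]; rewrite !inE ?inlE //= orbF.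
by rewrite !cardsU1 cards1 !inE inlE (negbTE ac).
Qed.

Lemma ordY_leaf : ord RY leaf = 1.
Proof.
rewrite /ord.
have -> : [set v | (v != leaf) && RY leaf v] = [set mid] by apply/setP => -[q|[]]; rewrite !inE.
exact: cards1.
Qed.

Lemma connect_lift (S : pred V) u u' : S (squash a u) -> S (squash a u') ->
  connect [rel p q | [&& S p, S q & RA p q]] (squash a u) (squash a u') ->
  connect [rel x y | [&& S (squash a x), S (squash a y) & RY x y]] u u'.
Proof.
move=> Su Su' conn; set e := [rel x y | _].
have e_sym : connect_sym e by apply: sym_connect_sym => x y; rewrite /e /= RY_sym andbCA.
have mid_a : S a -> connect e (inl a) mid by move=> Sa; apply: connect1; rewrite /= Sa eqxx.
have from_inl v : S (squash a v) -> connect e (inl (squash a v)) v.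
  case: v => [p|[]] /= Sv; [exact: connect0 | exact: mid_a |].
  by apply: connect_trans (mid_a Sv) (connect1 _); rewrite /= Sv.
apply: (connect_trans (y := inl (squash a u))); first by rewrite e_sym; exact: from_inl.
apply: connect_trans (from_inl _ Su').
apply: (connect_hom (h := inl) _ conn) => p q /and3P [Sp Sq Rpq].
case: (boolP (is_ac p q)) => pq; last by apply: connect1; rewrite /= Sp Sq Rpq pq.
have Sa : S a by case/orP: pq => /andP [/eqP pE /eqP qE]; [rewrite -pE | rewrite -qE].
have [pac qac] : ((p == a) || (p == c)) /\ ((q == a) || (q == c)).
  by case/orP: pq => /andP [-> ->]; rewrite ?orbT.
by apply: (connect_trans (y := mid)); apply: connect1; rewrite /= ?Sp ?Sq Sa.
Qed.

Lemma RY_connected u v : connect RY u v.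
Proof.
have := @connect_lift predT u v isT isT ((t_tree A).1 _ _).
by apply: connect_sub => x y /and3P [_ _ Rxy]; exact: connect1.
Qed.

Lemma squash_epi : monotone_epi RY RA (squash a).
Proof.
split; first by move=> u v; apply: squash_hom; rewrite eqxx.
split.
  move=> p q Rpq; case: (boolP (is_ac p q)) => pq.
    case/orP: pq => /andP [/eqP -> /eqP ->]; [exists mid, (inl c) | exists (inl c), mid];
    by rewrite /= eqxx ?orbT.
  by exists (inl p), (inl q); rewrite /= Rpq pq.
move=> S cS u v; rewrite !inE => uS vS.
apply: connect_sub (connect_lift (S := fun p => p \in S) uS vS (cS _ _ uS vS)).
by move=> x y /and3P [xS yS Rxy]; apply: connect1; rewrite !inE xS yS Rxy.
Qed.

Lemma squash_wc : weakly_coherent RY RA (squash a).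
Proof.
move=> p _; exists (inl p); split=> //=; first by rewrite ordY_inl.
  move=> u1 u2 h1 h2 /and3P [_ _ conn].
  have off v : squash a v != p -> v != inl p by apply: contraNneq => ->.
  rewrite /same_comp !off //=.
  apply: connect_sub (connect_lift (S := fun q => q != p) h1 h2 conn).
  move=> x y /and3P [xp yp Rxy].
  by apply: connect1; rewrite Rxy !off.
move=> u1 u2 h1 h2 /and3P [_ _ conn]; rewrite /same_comp h1 h2 /=.
(* Collapsing the new vertices onto the neighbour [q] of [mid] other than [p] keeps
   [Y \ {inl p}] inside [A \ {p}]. *)
pose q := if p == a then c else a.
have qac : (q == a) || (q == c) by rewrite /q; case: ifP; rewrite eqxx ?orbT.
have qp : q != p by rewrite /q; case: (eqVneq p a) => [->|pa]; rewrite eq_sym.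
have sq v : squash a v != p -> squash q v = squash a v.
  by case: v => [//|b] /= ap; rewrite /q eq_sym (negbTE ap).
rewrite -(sq _ h1) -(sq _ h2); apply: (connect_hom (h := squash q) _ conn).
move=> x y /and3P [xp yp Rxy]; apply: connect1; rewrite squash_hom // andbT.
have off v : v != inl p -> squash q v != p by case: v => [r|[]] //=; rewrite inlE.
by rewrite !off.
Qed.

Lemma squash_lab p l : 3 <= ord RA p -> tlab p = Some l ->
  forall b, wc_witness RY RA (squash a) p b -> labY b = Some l.
Proof.
move=> p3 pl [q|[]] [/= pE ord_le _ _]; rewrite ?pE //.
by move: (leq_trans p3 ord_le); rewrite ordY_leaf.
Qed.

Lemma adjY_leaf u : adj RY leaf u -> u = mid.
Proof. by case: u => [q|[]]. Qed.

Lemma adjY_mid u : adj RY mid u -> u != leaf -> exists2 p, u = inl p & (p == a) || (p == c).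
Proof. by case: u => [p|[]] // /andP [_ pac]; exists p. Qed.

Lemma is_ac_of p q : (p == a) || (p == c) -> (q == a) || (q == c) -> p != q -> is_ac p q.
Proof. by case/orP => /eqP -> /orP [] /eqP ->; rewrite /is_ac ?eqxx ?orbT. Qed.

Lemma map_inl_squash s : leaf \notin s -> mid \notin s -> map inl (map (squash a) s) = s.
Proof.
elim: s => [|[p|[]] s IH] //=; rewrite !inE //= => ls ms; by rewrite IH.
Qed.

Lemma path_inl p L : path (adj RY) (inl p) (map inl L) -> path (adj RA) p L.
Proof.
elim: L p => [|q L IH] p //= /andP [/andP [pq /andP [Rpq _]] /IH ->].
by rewrite /adj -inlE pq Rpq.
Qed.

Lemma leaf_notin_cycle s : 3 <= size s -> uniq s -> cycle (adj RY) s -> leaf \notin s.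
Proof.
move=> s3 us cs; apply/negP => /(cycle_through s3 cs) [v [t [w [ps /adjY_leaf vE _ wl]]]].
have wE : w = mid by apply: adjY_leaf; rewrite /adj eq_sym RY_sym.
by move: us; rewrite (perm_uniq ps) vE wE /= mem_rcons mem_head /= andbF.
Qed.

Lemma inl_inj : injective (@inl V bool).
Proof. by move=> p q []. Qed.

Lemma cycle_inl L : cycle (adj RY) (map inl L) -> cycle (adj RA) L.
Proof. by case: L => //= p L; rewrite -map_rcons; exact: path_inl. Qed.

(* A cycle through [mid] must use the subdivided edge, so it would yield a cycle in [A]. *)
Lemma no_cycle_through_mid v t w :
  uniq [:: mid, v & rcons t w] -> leaf \notin v :: rcons t w ->
  adj RY mid v -> path (adj RY) v (rcons t w) -> adj RY w mid -> False.
Proof.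
move=> /andP [mnot uvtw] lnot mv pvw wm.
move: lnot mnot; rewrite !inE !negb_or ![_ == v]eq_sym => /andP [lv ltw] /andP [_ mtw].
have [p vE pac] := adjY_mid mv lv.
have [q wE qac] : exists2 q, w = inl q & (q == a) || (q == c).
  apply: adjY_mid; first by rewrite /adj eq_sym RY_sym.
  by apply: contraNneq ltw => <-; rewrite mem_rcons mem_head.
have pq : p != q.
  by move: uvtw => /andP [+ _]; apply: contraNneq => pq; rewrite vE wE pq mem_rcons mem_head.
have acpq := is_ac_of pac qac pq.
have t0 : 0 < size t.
  by case: t pvw {uvtw ltw mtw} => //= /andP [+ _]; rewrite vE wE /adj /= acpq /= !andbF.
have tE := map_inl_squash ltw mtw.
apply: (negP ((t_tree A).2 (p :: map (squash a) (rcons t w)) _ _)).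
- by rewrite /= size_map size_rcons !ltnS.
- by rewrite -(map_inj_uniq inl_inj) /= tE -vE.
- rewrite /= rcons_path path_inl ?tE -?vE // map_rcons last_rcons wE /=.
  by move/is_ac_RA: acpq; rewrite eq_sym (@t_sym _ A).
Qed.

Lemma RY_acyclic s : 3 <= size s -> uniq s -> ~~ cycle (adj RY) s.
Proof.
move=> s3 us; apply/negP => cs; have ls := leaf_notin_cycle s3 us cs.
case: (boolP (mid \in s)) => [/(cycle_through s3 cs) [v [t [w [ps mv pvw wm]]]] | ms].
  apply: (no_cycle_through_mid _ _ mv pvw wm); first by rewrite -(perm_uniq ps).
  by apply: contra ls => l; rewrite (perm_mem ps) inE l orbT.
have sE := map_inl_squash ls ms.
apply: (negP ((t_tree A).2 (map (squash a) s) _ _)).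
- by rewrite size_map.
- by rewrite -(map_inj_uniq inl_inj) sE.
- by apply: cycle_inl; rewrite sE.
Qed.

Lemma RY_tree : is_tree RY.
Proof. by split; [exact: RY_connected | exact: RY_acyclic]. Qed.

Lemma RY_has_ram : exists u, is_ram RY u.
Proof. by exists (inl a); rewrite /is_ram ordY_inl. Qed.

Lemma RY_vert u : is_endpoint RY u || is_ram RY u.
Proof.
case: u => [p|[]]; rewrite /is_endpoint /is_ram ?ordY_inl ?ordY_mid ?ordY_leaf //.
exact: t_vert.
Qed.

Lemma RY_lab_ram u : is_ram RY u -> exists l, [/\ labY u = Some l, P l & le_ext (ord RY u) l].
Proof.
case: u => [p|[]]; rewrite /is_ram ?ordY_inl ?ordY_mid ?ordY_leaf //= => u3.
  exact: t_lab_ram.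
have [l [al Pl le]] := t_lab_ram a_ram; exists l; split=> //.
by case: l {al Pl} le => //= n; exact: leq_trans a_ram.
Qed.

Lemma RY_lab_end u : is_endpoint RY u -> labY u = None.
Proof.
case: u => [p|[]]; rewrite /is_endpoint ?ordY_inl ?ordY_mid ?ordY_leaf //=.
exact: t_lab_end.
Qed.

Definition Ysub : tobj P :=
  @TObj P _ RY labY RY_refl RY_sym RY_tree RY_has_ram RY_vert RY_lab_ram RY_lab_end.

Lemma inl_endpoint (y : EndT A) : is_endpoint (tR Ysub) (inl (val y)).
Proof. by rewrite /is_endpoint /= ordY_inl; exact: (valP y). Qed.

Definition squash_arr : tarr Ysub A :=
  @TArr P Ysub A (squash a) (fun y => exist _ (inl (val y)) (inl_endpoint y))
    squash_epi squash_wc squash_lab (fun y => erefl).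

Lemma leaf_endpoint : is_endpoint (tR Ysub) leaf.
Proof. by rewrite /is_endpoint /= ordY_leaf. Qed.

Definition leaf_end : EndT Ysub := exist _ leaf leaf_endpoint.

End SubdivideEdge.

Lemma endpoint_over_ram P (A : tobj P) a : is_ram (tR A) a ->
  exists (Y : tobj P) (f : tarr Y A) (e : EndT Y), pm f (val e) = a.
Proof.
move=> a_ram; have /card_gt0P [c] : 0 < ord (tR A) a by apply: leq_trans a_ram.
rewrite inE => /andP [ca Rac]; rewrite eq_sym in ca.
exists (Ysub a_ram ca Rac), (squash_arr a_ram ca Rac).
by exists (leaf_end a_ram ca Rac).
Qed.

Theorem in_E_dense P (F : nat -> tobj P) (fb : forall n, tarr (F n.+1) (F n)) :
  fraisse_seq fb -> dense_in_Lim fb (in_E fb).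
Proof.
move=> [_ fr_ext] x xL n.
suff [e [eE en]] : exists e, in_E fb e /\ e n = x n.
  by exists e; split=> //; exact: inLim_eq_below eE.1 xL en.
case/orP: (t_vert (x n)) => [xE | /endpoint_over_ram [Y [f [y fy]]]].
  exact: (in_E_through fb (exist _ (x n) xE : EndT (F n))).
have [k [g [fg _]]] := fr_ext n Y f.
have [e [eE ek]] := in_E_through fb (em g y).
by exists e; split=> //; rewrite -(pcomp_inLim eE.1 n k) ek -fg pm_em fy.
Qed.

Theorem mainTheorem5 (P : ext_nat -> Prop)
  (HP : forall n, P (Some n) -> 3 <= n)
  (F : nat -> tobj P) (fb : forall n, tarr (F n.+1) (F n))
  (Hfr : fraisse_seq fb) :
  (forall x, in_E fb x -> isEndLim fb x) /\ dense_in_Lim fb (in_E fb).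
Proof.
by split; [exact: in_E_isEndLim | exact: in_E_dense].
Qed.
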